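(* Let $G$ be a group, let $\mathbb{F}$ be a field, and let $(W,V,\mu)$ be a partial $G$-algebra over $\mathbb{F}$. Let $Y\subseteq W$ be a $G$-invariant subset. Then there exists a unique smallest $G$-submodule $W(Y)$ of $W$ such that \[ W(Y)=\langle Y\rangle+\mu\big(S^2(W(Y)\cap V)\big), \] where $\langle Y\rangle$ denotes the $\mathbb{F}$-linear span of $Y$.
   Context: A partial $G$-algebra is a triple $(W,V,\mu)$ where $W$ is an $\mathbb{F}G$-module, $V\subseteq W$ is a $G$-submodule, and $\mu\colon S^2(V)\to W$ is a $G$-equivariant linear map from the symmetric square of $V$ to $W$. For a subspace $U\subseteq V$, $S^2(U)$ is regarded as a subspace of $S^2(V)$, and $\mu(S^2(U))$ denotes its image under $\mu$. *)

From mathcomp Require Import all_boot all_order all_algebra.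
Set Implicit Arguments. Unset Strict Implicit. Unset Printing Implicit Defensive.
Import GRing.Theory.
Local Open Scope ring_scope.

Record AbsGroup := {
  gcar :> Type;
  gmul : gcar -> gcar -> gcar;
  gone : gcar;
  ginv : gcar -> gcar;
  gmulA : forall x y z, gmul x (gmul y z) = gmul (gmul x y) z;
  gmul1 : forall x, gmul gone x = x;
  gmulV : forall x, gmul (ginv x) x = gone
}.

Definition subset_of (T : Type) (A B : T -> Prop) := forall x, A x -> B x.

Definition is_subspace (F : fieldType) (W : lmodType F) (S : W -> Prop) :=
  [/\ S 0, (forall x y, S x -> S y -> S (x + y)) &
      (forall (a : F) x, S x -> S (a *: x))].

Definition span (F : fieldType) (W : lmodType F) (Y : W -> Prop) : W -> Prop :=
  fun w => forall S : W -> Prop, is_subspace S -> subset_of Y S -> S w.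

Definition sum_set (F : fieldType) (W : lmodType F) (A B : W -> Prop) : W -> Prop :=
  fun w => exists a b, A a /\ B b /\ w = a + b.

(* The G-equivariant linear map
   mu : S^2(V) -> W is represented (by the universal property of the
   symmetric square) by the symmetric F-bilinear G-equivariant map
   V x V -> W, (u, v) |-> mu(u v); its values outside V x V are irrelevant. *)
Record partial_G_algebra (G : AbsGroup) (F : fieldType) := {
  PW : lmodType F;
  act : G -> PW -> PW;
  act_add : forall g x y, act g (x + y) = act g x + act g y;
  act_scale : forall g (a : F) x, act g (a *: x) = a *: act g x;
  act_one : forall x, act (gone G) x = x;
  act_mul : forall g h x, act (gmul g h) x = act g (act h x);
  PV : PW -> Prop;
  PV_subspace : is_subspace PV;
  PV_stable : forall g v, PV v -> PV (act g v);
  mu : PW -> PW -> PW;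
  mu_sym : forall u v, PV u -> PV v -> mu u v = mu v u;
  mu_addl : forall u u' v, PV u -> PV u' -> PV v -> mu (u + u') v = mu u v + mu u' v;
  mu_scalel : forall (a : F) u v, PV u -> PV v -> mu (a *: u) v = a *: mu u v;
  mu_equiv : forall g u v, PV u -> PV v -> mu (act g u) (act g v) = act g (mu u v)
}.
Arguments act {G F} p g x.
Arguments PV {G F} p x.
Arguments mu {G F} p x y.

Definition is_G_submodule G F (A : partial_G_algebra G F) (S : PW A -> Prop) :=
  is_subspace S /\ forall g x, S x -> S (act A g x).

(* mu(S^2(U)) for U a subset of V: the span of {mu(u v) | u, v in U}
   (S^2(U) is spanned by the products u v, u, v in U). *)
Definition mu_S2 G F (A : partial_G_algebra G F) (U : PW A -> Prop) : PW A -> Prop :=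
  span (fun w => exists u v, U u /\ U v /\ w = mu A u v).

Arguments mu_S2 {G F} A U _.

Definition WY_eq G F (A : partial_G_algebra G F) (Y M : PW A -> Prop) :=
  forall w, M w <-> sum_set (span Y) (mu_S2 A (fun x => M x /\ PV A x)) w.

From Pilot Require Import Defs.
From mathcomp Require Import all_boot all_order all_algebra.
Set Implicit Arguments. Unset Strict Implicit. Unset Printing Implicit Defensive.
Import GRing.Theory.
Local Open Scope ring_scope.
Local Notation span := Defs.span.

(* W(Y) is the least fixed point of the monotone operator
   N |-> <Y> + mu(S^2(N ∩ V)) in the lattice of G-submodules of W, obtained
   (Knaster-Tarski) as the intersection of all G-submodules N containing
   <Y> + mu(S^2(N ∩ V)).  This operator maps G-submodules to G-submodules
   because Y is G-invariant and mu is G-equivariant. *)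

Definition bigcap (T : Type) (Q : (T -> Prop) -> Prop) : T -> Prop :=
  fun x => forall N, Q N -> N x.

Section LeastFixpoint.
Variables (T : Type) (P : (T -> Prop) -> Prop) (Phi : (T -> Prop) -> T -> Prop).

Definition lfp : T -> Prop := bigcap (fun N => P N /\ subset_of (Phi N) N).

Lemma lfp_least N : P N -> subset_of (Phi N) N -> subset_of lfp N.
Proof. by move=> PN PhiN x; apply. Qed.

Hypothesis Phi_mono : forall N N', subset_of N N' -> subset_of (Phi N) (Phi N').
Hypothesis P_Phi : forall N, P N -> P (Phi N).

Lemma lfp_prefix : subset_of (Phi lfp) lfp.
Proof.
move=> x Phi_x N [PN PhiN]; apply: (PhiN).
by apply: (Phi_mono _ Phi_x); apply: lfp_least.
Qed.

Lemma lfp_fixpoint : P lfp -> forall x, lfp x <-> Phi lfp x.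
Proof.
move=> P_lfp x; split; last exact: lfp_prefix.
by apply: lfp_least; [apply: P_Phi | apply: Phi_mono; apply: lfp_prefix].
Qed.

End LeastFixpoint.

Section Subspaces.
Variables (F : fieldType) (W : lmodType F).
Implicit Types Y Z S : W -> Prop.

Lemma subset_span Y : subset_of Y (span Y).
Proof. by move=> x Yx S _; apply. Qed.

Lemma span_min Y S : is_subspace S -> subset_of Y S -> subset_of (span Y) S.
Proof. by move=> subS YS x; apply. Qed.

Lemma span_subspace Y : is_subspace (span Y).
Proof.
split=> [S [S0 _ _] _ | x y spx spy S subS YS | a x spx S subS YS] //.
- by case: (subS) => _ SD _; apply: SD; [apply: spx | apply: spy].
- by case: (subS) => _ _ SZ; apply: SZ; apply: spx.
Qed.

Lemma span_mono Y Z : subset_of Y Z -> subset_of (span Y) (span Z).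
Proof.
move=> YZ; apply: span_min; first exact: span_subspace.
by move=> x /YZ; apply: subset_span.
Qed.

Lemma sum_set_subspace S S' : is_subspace S -> is_subspace S' -> is_subspace (sum_set S S').
Proof.
move=> [S0 SD SZ] [S'0 S'D S'Z]; split.
- by exists 0, 0; rewrite addr0.
- move=> _ _ [a [b [Sa [S'b ->]]]] [a' [b' [Sa' [S'b' ->]]]].
  by exists (a + a'), (b + b'); rewrite addrACA; auto.
- by move=> c _ [a [b [Sa [S'b ->]]]]; exists (c *: a), (c *: b); rewrite scalerDr; auto.
Qed.

Lemma sum_set_mono S1 S2 S1' S2' : subset_of S1 S1' -> subset_of S2 S2' ->
  subset_of (sum_set S1 S2) (sum_set S1' S2').
Proof. by move=> S11 S22 _ [a [b [S1a [S2b ->]]]]; exists a, b; auto. Qed.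

End Subspaces.

Section LinearImages.
Variables (F : fieldType) (W W' : lmodType F) (f : W -> W').
Hypothesis f_add : forall x y, f (x + y) = f x + f y.
Hypothesis f_scale : forall (a : F) x, f (a *: x) = a *: f x.

Lemma subspace_preimage (S : W' -> Prop) : is_subspace S -> is_subspace (fun x => S (f x)).
Proof.
move=> [S0 SD SZ]; split=> [| x y | a x].
- by have := f_scale 0 0; rewrite !scale0r => ->.
- by rewrite f_add; apply: SD.
- by rewrite f_scale; apply: SZ.
Qed.

Lemma span_image (Y : W -> Prop) (Z : W' -> Prop) :
  (forall y, Y y -> Z (f y)) -> forall x, span Y x -> span Z (f x).
Proof.
move=> YZ; apply: span_min; first exact/subspace_preimage/span_subspace.
by move=> y /YZ; apply: subset_span.
Qed.

End LinearImages.

Section WY.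
Variables (G : AbsGroup) (F : fieldType) (A : partial_G_algebra G F).
Implicit Types Y N : PW A -> Prop.

Lemma G_submodule_bigcap (Q : (PW A -> Prop) -> Prop) :
  (forall N, Q N -> is_G_submodule N) -> is_G_submodule (bigcap Q).
Proof.
move=> QG; split; first split.
- by move=> N /QG [[N0 _ _] _].
- by move=> x y Nx Ny N QN; have [[_ ND _] _] := QG N QN; apply: ND; [apply: Nx | apply: Ny].
- by move=> a x Nx N QN; have [[_ _ NZ] _] := QG N QN; apply: NZ; apply: Nx.
- by move=> g x Nx N QN; have [_ NG] := QG N QN; apply: NG; apply: Nx.
Qed.

Definition WY_map Y N : PW A -> Prop := sum_set (span Y) (mu_S2 A (fun x => N x /\ PV A x)).

Lemma WY_map_mono Y N N' : subset_of N N' -> subset_of (WY_map Y N) (WY_map Y N').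
Proof.
move=> NN'; apply: sum_set_mono => //; apply: span_mono.
by move=> _ [u [v [[Nu Vu] [[Nv Vv] ->]]]]; exists u, v; auto.
Qed.

Lemma span_act Y : (forall g y, Y y -> Y (act A g y)) ->
  forall g x, span Y x -> span Y (act A g x).
Proof. by move=> YG g; apply: span_image; [apply: act_add | apply: act_scale | apply: YG]. Qed.

Lemma WY_map_G_submodule Y N : (forall g y, Y y -> Y (act A g y)) ->
  is_G_submodule N -> is_G_submodule (WY_map Y N).
Proof.
move=> YG [_ NG]; split; first by apply: sum_set_subspace; apply: span_subspace.
move=> g _ [a [b [spa [mub ->]]]]; exists (act A g a), (act A g b).
rewrite act_add; split; first exact: span_act.
split=> //; apply: span_act mub => h _ [u [v [[Nu Vu] [[Nv Vv] ->]]]].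
exists (act A h u), (act A h v); rewrite mu_equiv //.
by do !split; by [apply: NG | apply: PV_stable].
Qed.

End WY.

Theorem lemma5p2 (G : AbsGroup) (F : fieldType) (A : partial_G_algebra G F)
  (Y : PW A -> Prop) (HY : forall g y, Y y -> Y (act A g y)) :
  exists M : PW A -> Prop,
    [/\ is_G_submodule M, WY_eq Y M,
        (forall N, is_G_submodule N -> WY_eq Y N -> subset_of M N) &
        (forall M', is_G_submodule M' -> WY_eq Y M' ->
           (forall N, is_G_submodule N -> WY_eq Y N -> subset_of M' N) ->
           forall w, M' w <-> M w)].
Proof.
pose M := lfp (@is_G_submodule G F A) (WY_map Y).
have MG : is_G_submodule M by apply: G_submodule_bigcap => N [].
have MY : WY_eq Y M.
  exact: lfp_fixpoint (@WY_map_mono _ _ A Y) (fun N => WY_map_G_submodule HY) MG.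
have M_least N : is_G_submodule N -> WY_eq Y N -> subset_of M N.
  by move=> NG NY; apply: lfp_least NG _ => w /NY.
exists M; split=> // M' M'G M'Y M'_least w.
by split; [apply: M'_least | apply: M_least].
Qed.
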